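(* Let $\Pi$ be a Klein tableau with entries at most $2$, encoded as $\Pi=[\gamma;\zeta=\beta^0;\beta^1,\ldots,\beta^s=\beta]$. Define $$x(\Pi)=\sum_j\big(\bar\zeta_j-\bar\gamma_j+|\beta^{j-1}|-|\beta^j|\big)\sum_{k>j}\big(\bar\beta^{j-1}_k-\bar\zeta_k\big)+\sum_j\sum_{\ell>j}\big(\bar\beta^j_{\ell+1}-\bar\beta^{j-1}_{\ell+1}\big)\sum_{k=j+1}^{\ell}\big(\bar\beta^{j-1}_k-\bar\zeta_k\big).$$ Then $x(\Pi)$ equals the number $x(\Delta)$ of crossings in the arc diagram $\Delta$ of $\Pi$.
   Context: For a partition $\lambda$ the Young diagram has columns of lengths $\lambda_1,\lambda_2,\ldots$; rows numbered from the top starting at $1$; $\bar\lambda$ is the conjugate partition so $\bar\lambda_k$ is the number of boxes in row $k$; $|\lambda|=\sum_i\lambda_i$. An LR-tableau of type $(\alpha,\beta,\gamma)$ with entries at most $2$ is a filling of the skew diagram $\beta\setminus\gamma$ with $\bar\alpha_1$ entries $1$ and $\bar\alpha_2$ entries $2$, weakly increasing along rows, strictly increasing down columns, and such that for each $c\ge0$ the number of entries $2$ in columns to the right of column $c$ is at most the number of entries $1$ there. A Klein tableau is such an LR-tableau in which each entry $2$ carries a subscript $r$ ($2_r$) with: (a) if $2_r$ is in row $m$ then $1\le r\le m-1$; (b) if $2_r$ is in row $m$ and the box above it contains $1$ then $r=m-1$; (c) the number of entries $2_r$ is at most the number of entries $1$ in row $r$. The encoding $[\gamma;\zeta;\beta^1,\dots,\beta^s]$: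 $\gamma$ is the shape of the empty boxes, $\zeta=\beta^0$ the shape formed by the empty boxes and the boxes $1$, and $\beta^j$ the shape formed by the empty boxes, the boxes $1$ and the boxes $2_i$ with $i\le j$. The arc diagram $\Delta$ of $\Pi$ is the multiset consisting of an arc $(m,r)$ for each entry $2_r$ in row $m$, together with, at each position $r$, as many poles as the number of entries $1$ in row $r$ minus the number of arcs ending at $r$. The number of crossings $x(\Delta)$ is the number (with multiplicity) of pairs of arcs $(m,r),(n,s)$ with $m>n>r>s$ plus the number of pairs (arc $(m,s)$, pole at $r$) with $m>r>s$. *)

From mathcomp Require Import all_boot all_algebra.
Set Implicit Arguments.
Unset Strict Implicit.
Unset Printing Implicit Defensive.
Import GRing.Theory Num.Theory.

(* Conventions (as in the paper): a partition [l : seq nat] lists the COLUMN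
   lengths l_1 >= l_2 >= ...; rows and columns are numbered from 1;
   box (m, c) = (row m, column c) lies in l iff m <= l_c. *)

Definition col (l : seq nat) (c : nat) : nat := nth 0 l c.-1.
Definition rowlen (l : seq nat) (k : nat) : nat := count (fun x => k <= x) l.
Definition is_partition (l : seq nat) : bool := sorted geq l.
Definition nrows (l : seq nat) : nat := foldr maxn 0 l.
Definition rows (l : seq nat) : seq nat := iota 1 (nrows l).
Definition cols (l : seq nat) : seq nat := iota 1 (size l).

(* entries of a Klein tableau with entries at most 2: 1, or 2_r *)
Inductive kentry := KOne | KTwo of nat.
Definition kval (e : kentry) : nat := match e with KOne => 1 | KTwo _ => 2 end.
Definition is_one (e : kentry) : bool := if e is KOne then true else false.
Definition is_two (e : kentry) : bool := if e is KTwo _ then true else false.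
Definition is_two_with (r : nat) (e : kentry) : bool :=
  if e is KTwo i then i == r else false.
Definition is_two_le (j : nat) (e : kentry) : bool :=
  if e is KTwo i then i <= j else false.
Definition two_sub (e : kentry) : nat := if e is KTwo r then r else 0.

Section Tab.
Variables (beta gamma : seq nat) (T : nat -> nat -> kentry).

Definition in_skew (m c : nat) : bool :=
  [&& 0 < c, col gamma c < m & m <= col beta c].

Definition skew_boxes : seq (nat * nat) :=
  [seq p <- [seq (m, c) | m <- rows beta, c <- cols beta] | in_skew p.1 p.2].

Definition ones_row (m : nat) : nat :=
  count (fun c => in_skew m c && is_one (T m c)) (cols beta).

(* LR-tableau of type (alpha, beta, gamma) with entries at most 2
   (alpha is determined by the numbers of entries 1 and 2). *)
Definition is_LR2 : Prop :=
  [/\ [/\ is_partition beta, is_partition gamma &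
          (forall c, col gamma c <= col beta c)],
      (forall m c c', c < c' -> in_skew m c -> in_skew m c' ->
                      kval (T m c) <= kval (T m c')),
      (forall m m' c, m < m' -> in_skew m c -> in_skew m' c ->
                      kval (T m c) < kval (T m' c)) &
      (forall c0 : nat,
         count (fun p => (c0 < p.2) && is_two (T p.1 p.2)) skew_boxes
         <= count (fun p => (c0 < p.2) && is_one (T p.1 p.2)) skew_boxes)].

Definition is_Klein : Prop :=
  [/\ is_LR2,
      (* (a) *)
      (forall m c r, in_skew m c -> T m c = KTwo r -> 1 <= r <= m.-1),
      (* (b) *)
      (forall m c r, in_skew m c -> T m c = KTwo r ->
                     in_skew m.-1 c -> T m.-1 c = KOne -> r = m.-1) &
      (* (c) *)
      (forall r, count (fun p => is_two_with r (T p.1 p.2)) skew_boxes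
                 <= ones_row r)].

(* row lengths of beta^j: empty boxes, boxes 1, boxes 2_i with i <= j *)
Definition bbar (j k : nat) : nat :=
  rowlen gamma k + ones_row k
  + count (fun c => in_skew k c && is_two_le j (T k c)) (cols beta).
Definition zbar (k : nat) : nat := bbar 0 k.
Definition size_b (j : nat) : nat := \sum_(k <- rows beta) bbar j k.

Definition xPi : int :=
  \sum_(j <- rows beta)
     ((zbar j)%:Z - (rowlen gamma j)%:Z + (size_b j.-1)%:Z - (size_b j)%:Z)
     * \sum_(k <- rows beta | (j < k)%N) ((bbar j.-1 k)%:Z - (zbar k)%:Z)
  + \sum_(j <- rows beta) \sum_(l <- rows beta | (j < l)%N)
     ((bbar j l.+1)%:Z - (bbar j.-1 l.+1)%:Z)
     * \sum_(k <- rows beta | (j < k < l.+1)%N)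
          ((bbar j.-1 k)%:Z - (zbar k)%:Z).

(* arc diagram: an arc (m, r) for each entry 2_r in row m (multiset) *)
Definition arcs : seq (nat * nat) :=
  [seq (p.1, two_sub (T p.1 p.2)) | p <- skew_boxes & is_two (T p.1 p.2)].

Definition poles (r : nat) : nat :=
  ones_row r - count (fun a => a.2 == r) arcs.

Definition crossings : nat :=
  \sum_(a <- arcs) \sum_(b <- arcs)
      [&& b.1 < a.1, a.2 < b.1 & b.2 < a.2]
  + \sum_(a <- arcs) \sum_(r <- rows beta | (r < a.1) && (a.2 < r)) poles r.

End Tab.

From Pilot Require Import Defs.
From mathcomp Require Import all_boot all_algebra.
From mathcomp Require Import zify.
Import GRing.Theory Num.Theory.

(* Row lengths of consecutive shapes differ by entries [2_r]: [\bar\beta^j_k -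
   \bar\beta^{j-1}_k] is the number of arcs [(k, j)], and summing
   [\bar\beta^{j-1}_k - \bar\zeta_k] over [k] in a set [K] counts the arcs [(k, s)]
   with [k \in K] and [s < j] (condition (a) makes [\zeta] free of entries 2).
   The first factor of the first sum of [x(Pi)] is the number of poles at [j]
   (condition (c) keeps it nonnegative), so that sum counts the pairs
   (pole at [j], arc [(m, s)]) with [m > j > s]; the second sum counts the pairs
   of arcs [(l+1, j)], [(k, s)] with [l+1 > k > j > s]. *)

Lemma Posz_sum (I : Type) (r : seq I) (P : pred I) (F : I -> nat) :
  Posz (\sum_(i <- r | P i) F i) = (\sum_(i <- r | P i) (F i)%:Z)%R.
Proof. exact: (big_morph Posz PoszD). Qed.

Lemma sum_pred1_uniq (I : eqType) (r : seq I) x (F : I -> nat) :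
  uniq r -> x \in r -> \sum_(i <- r | i == x) F i = F x.
Proof. by move=> ur xr; rewrite -big_filter filter_pred1_uniq // big_seq1. Qed.

Lemma count_leq_pred (X : Type) (P : pred X) (f : X -> nat) (s : seq X) j : 0 < j ->
  count (fun x => P x && (f x <= j)) s =
  count (fun x => P x && (f x <= j.-1)) s + count (fun x => P x && (f x == j)) s.
Proof.
case: j => // j _; elim: s => //= x s ->; case: (P x) => //=.
by rewrite leq_eqVlt ltnS; case: eqP => [->|_] /=; rewrite ?ltnn; lia.
Qed.

Lemma sum_indicator_uniq (I : eqType) (r : seq I) x (F : I -> nat) :
  uniq r -> x \in r -> \sum_(i <- r) (i == x) * F i = F x.
Proof.
move=> ur xr; rewrite (bigD1_seq x) //= eqxx mul1n big1 ?addn0 // => i /negbTE ->.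
by rewrite mul0n.
Qed.

Lemma count_muln (X : Type) (P : pred X) (s : seq X) n :
  count P s * n = \sum_(x <- s) P x * n.
Proof. by rewrite -sum1_count big_distrl big_mkcond; apply: eq_bigr => x _; case: (P x). Qed.

Lemma leq_foldr_maxn (s : seq nat) x : x \in s -> x <= foldr maxn 0 s.
Proof.
elim: s => //= y s IH; rewrite in_cons leq_max => /orP[/eqP->|/IH->];
  by rewrite ?leqnn ?orbT.
Qed.

Section KleinTableau.
Variables (beta gamma : seq nat) (T : nat -> nat -> kentry).

Local Notation in_skew := (in_skew beta gamma).
Local Notation skew_boxes := (skew_boxes beta gamma).
Local Notation arcs := (arcs beta gamma T).

Lemma in_skew_rows m c : in_skew m c -> m \in rows beta.
Proof.
case/and3P=> c0 gm mb; rewrite mem_iota add1n ltnS (leq_ltn_trans _ gm) //=.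
apply: leq_trans mb _; rewrite /Defs.col; case: (ltnP c.-1 (size beta)) => [lt|ge].
  by apply/leq_foldr_maxn/mem_nth.
by rewrite nth_default.
Qed.

Lemma sum_rows_count_skew (Q : pred nat) (P : nat -> pred nat) :
  \sum_(k <- rows beta | Q k) count (fun c => in_skew k c && P k c) (cols beta)
  = count (fun p => Q p.1 && P p.1 p.2) skew_boxes.
Proof.
rewrite /Defs.skew_boxes count_filter.
elim: (rows beta) => [|k rs IH]; first by rewrite big_nil.
rewrite big_cons /= count_cat IH count_map; case Qk: (Q k) => /=.
  by congr (_ + _); apply: eq_count => c /=; rewrite Qk andbC.
by rewrite (@eq_count _ (preim _ _) pred0) ?count_pred0 // => c /=; rewrite Qk.
Qed.

Lemma count_arcs (a : pred (nat * nat)) :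
  count a arcs =
  count (fun p => is_two (T p.1 p.2) && a (p.1, two_sub (T p.1 p.2))) skew_boxes.
Proof. by rewrite count_map count_filter; apply: eq_count => p; rewrite andbC. Qed.

Definition twos_row (S : pred nat) (k : nat) : nat :=
  count (fun c => in_skew k c && (is_two (T k c) && S (two_sub (T k c)))) (cols beta).

Lemma sum_twos_row (Q S : pred nat) :
  \sum_(k <- rows beta | Q k) twos_row S k = count (fun a => Q a.1 && S a.2) arcs.
Proof.
rewrite sum_rows_count_skew count_arcs; apply: eq_count => p /=.
by case: (Q p.1); case: (is_two _).
Qed.

Lemma twos_rowE (S : pred nat) k :
  twos_row S k = count (fun a => (a.1 == k) && S a.2) arcs.
Proof.
rewrite -(sum_twos_row (fun i => i == k)); case: (boolP (k \in rows beta)) => kR.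
  by rewrite sum_pred1_uniq ?iota_uniq.
rewrite big_seq_cond big_pred0 => [|i]; last first.
  by apply/andP=> -[iR /eqP ik]; rewrite -ik iR in kR.
rewrite /twos_row (@eq_count _ _ pred0) ?count_pred0 // => c /=.
by apply/negP=> /andP[/in_skew_rows kR' _]; rewrite kR' in kR.
Qed.

Lemma bbarE j k :
  bbar beta gamma T j k = rowlen gamma k + ones_row beta gamma T k + twos_row (leq^~ j) k.
Proof.
by congr (_ + _); apply: eq_count => c; case: (T k c); rewrite ?andbF ?andbT.
Qed.

Lemma size_b_pred j : 0 < j ->
  size_b beta gamma T j = size_b beta gamma T j.-1 + count (fun a => a.2 == j) arcs.
Proof.
move=> j0; rewrite /size_b.
rewrite (eq_bigr _ (fun k _ => bbarE j k)) (eq_bigr _ (fun k _ => bbarE j.-1 k)).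
by rewrite !big_split /= !sum_twos_row count_leq_pred // !addnA.
Qed.

Lemma bbar_sub_pred j k : 0 < j ->
  ((bbar beta gamma T j k)%:Z - (bbar beta gamma T j.-1 k)%:Z
   = (count (fun a => (a.1 == k) && (a.2 == j)) arcs)%:Z)%R.
Proof.
move=> j0; rewrite !bbarE !twos_rowE count_leq_pred //=; lia.
Qed.

Lemma pole_crossingsE :
  \sum_(a <- arcs) \sum_(r <- rows beta | (r < a.1) && (a.2 < r)) poles beta gamma T r
  = \sum_(r <- rows beta) poles beta gamma T r * count (fun a => (r < a.1) && (a.2 < r)) arcs.
Proof.
rewrite (exchange_big_dep predT) //=; apply: eq_bigr => r _.
by rewrite big_const_seq iter_addn_0 mulnC.
Qed.

Hypothesis sub_range : forall m c r, in_skew m c -> T m c = KTwo r -> 1 <= r <= m.-1.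

Lemma zbarE k : zbar beta gamma T k = rowlen gamma k + ones_row beta gamma T k.
Proof.
rewrite /zbar bbarE /twos_row (@eq_count _ _ pred0) ?count_pred0 ?addn0 // => c /=.
case Hs: (in_skew k c); case Tkc: (T k c) => [|r] //=.
by have /andP[r1 _] := sub_range _ _ _ Hs Tkc; rewrite leqn0 eqn0Ngt r1.
Qed.

Lemma arc_bounds a : a \in arcs -> 0 < a.2 < a.1 /\ a.1 \in rows beta.
Proof.
case/mapP=> p; rewrite !mem_filter => /andP[two /andP[Hs _]] ->{a} /=.
split; last exact: in_skew_rows Hs.
case Tp: (T p.1 p.2) two => [|r] //= _.
by have := sub_range _ _ _ Hs Tp; lia.
Qed.

Lemma arc_crossingsE :
  \sum_(a <- arcs) \sum_(b <- arcs) [&& b.1 < a.1, a.2 < b.1 & b.2 < a.2]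
  = \sum_(j <- rows beta) \sum_(l <- rows beta | j < l)
      count (fun a => (a.1 == l.+1) && (a.2 == j)) arcs *
      count (fun b => (j < b.1 < l.+1) && (b.2 < j)) arcs.
Proof.
set N := fun j l => count (fun b => (j < b.1 < l.+1) && (b.2 < j)) arcs.
have N0 j l : ~~ (j < l) -> N j l = 0.
  move=> lj; rewrite /N (@eq_count _ _ pred0) ?count_pred0 // => b /=; lia.
symmetry; transitivity (\sum_(a <- arcs) \sum_(j <- rows beta) \sum_(l <- rows beta)
    ((a.1 == l.+1) && (a.2 == j)) * N j l).
  rewrite exchange_big; apply: eq_bigr => j _; rewrite exchange_big big_mkcond.
  apply: eq_bigr => l _; rewrite count_muln.
  by case: ifP => // /negbT /N0 ->; rewrite big1 // => a _; rewrite muln0.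
apply: eq_big_seq => a aA.
have [/andP[a2 a21] a1R] := arc_bounds _ aA.
have a2R : a.2 \in rows beta by move: a1R; rewrite !mem_iota; lia.
have a1R' : a.1.-1 \in rows beta by move: a1R; rewrite !mem_iota; lia.
have indicator j l : ((a.1 == l.+1) && (a.2 == j)) * N j l
    = (j == a.2) * ((l == a.1.-1) * N j l).
  rewrite -[a.1](prednK (ltn_trans a2 a21)) eqSS [a.2 == j]eq_sym [_ == l]eq_sym.
  by case: (j == a.2); case: (l == _); rewrite ?mul0n ?mul1n.
under eq_bigr do under eq_bigr do rewrite indicator.
under eq_bigr do rewrite -big_distrr /=.
rewrite !sum_indicator_uniq ?iota_uniq // /N prednK ?(ltn_trans a2 a21) //.
rewrite -sumn_count sumnE big_map; apply: eq_bigr => b _.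
by case: (a.2 < b.1); case: (b.1 < a.1).
Qed.

Lemma sum_bbar_sub_zbar (Q : pred nat) j : 0 < j ->
  (\sum_(k <- rows beta | Q k) ((bbar beta gamma T j.-1 k)%:Z - (zbar beta gamma T k)%:Z)
   = (count (fun a => Q a.1 && (a.2 < j)%N) arcs)%:Z)%R.
Proof.
move=> j0; rewrite (eq_bigr (fun k => Posz (twos_row (leq^~ j.-1) k))) => [|k _]; last first.
  by rewrite bbarE zbarE; lia.
rewrite -Posz_sum sum_twos_row; congr Posz; apply: eq_count => a.
by rewrite -ltnS prednK.
Qed.

Lemma xPi_arcs_termE :
  (\sum_(j <- rows beta) \sum_(l <- rows beta | (j < l)%N)
     ((bbar beta gamma T j l.+1)%:Z - (bbar beta gamma T j.-1 l.+1)%:Z)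
     * \sum_(k <- rows beta | (j < k < l.+1)%N)
          ((bbar beta gamma T j.-1 k)%:Z - (zbar beta gamma T k)%:Z))%R
  = Posz (\sum_(j <- rows beta) \sum_(l <- rows beta | j < l)
      count (fun a => (a.1 == l.+1) && (a.2 == j)) arcs *
      count (fun b => (j < b.1 < l.+1) && (b.2 < j)) arcs).
Proof.
rewrite Posz_sum; apply: eq_big_seq => j; rewrite mem_iota => /andP[j0 _].
rewrite Posz_sum; apply: eq_bigr => l _.
by rewrite PoszM bbar_sub_pred // sum_bbar_sub_zbar.
Qed.

Hypothesis twos_le_ones : forall r,
  count (fun p => is_two_with r (T p.1 p.2)) skew_boxes <= ones_row beta gamma T r.

Lemma arcs_ending_le_ones r : count (fun a => a.2 == r) arcs <= ones_row beta gamma T r.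
Proof.
rewrite count_arcs (@eq_count _ _ (fun p => is_two_with r (T p.1 p.2))) ?twos_le_ones //.
by move=> p /=; case: (T p.1 p.2).
Qed.

Lemma xPi_poles_termE :
  (\sum_(j <- rows beta)
     ((zbar beta gamma T j)%:Z - (rowlen gamma j)%:Z
      + (size_b beta gamma T j.-1)%:Z - (size_b beta gamma T j)%:Z)
     * \sum_(k <- rows beta | (j < k)%N)
         ((bbar beta gamma T j.-1 k)%:Z - (zbar beta gamma T k)%:Z))%R
  = Posz (\sum_(r <- rows beta)
      poles beta gamma T r * count (fun a => (r < a.1) && (a.2 < r)) arcs).
Proof.
rewrite Posz_sum; apply: eq_big_seq => j; rewrite mem_iota => /andP[j0 _].
rewrite PoszM sum_bbar_sub_zbar // zbarE (size_b_pred _ j0) /poles; congr (_ * _)%R.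
have := arcs_ending_le_ones j; lia.
Qed.

End KleinTableau.

Theorem lemma2p3 (beta gamma : seq nat) (T : nat -> nat -> kentry) :
  is_Klein beta gamma T ->
  xPi beta gamma T = Posz (crossings beta gamma T).
Proof.
case=> _ sub_range _ twos_le_ones.
rewrite /xPi /crossings addnC PoszD xPi_poles_termE // xPi_arcs_termE //.
by rewrite pole_crossingsE arc_crossingsE.
Qed.
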